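(* Let $R$ be an integral domain with $R\neq K_R$. Assume there is a non-trivial real-valued additive valuation $\nu$ of $K_R$ with $\nu(r)\ge0$ for all $r\in R$. Then $K_R$, as an $R$-algebra, is not strongly simple.
   Context: $K_R$ is the field of fractions of $R$. An $R$-submodule $M$ of an $R$-algebra $\mathcal A$ is a (two-sided) Mathieu subspace if whenever $a\in\mathcal A$ satisfies $a^m\in M$ for all $m\ge1$, then for all $b,c\in\mathcal A$ there is $N$ with $ba^mc\in M$ for all $m\ge N$. $\mathcal A$ is strongly simple if its only Mathieu subspaces are $0$ and $\mathcal A$. A non-trivial real-valued additive valuation is a map $\nu:K_R^\times\to\mathbb R$ (extended by $\nu(0)=\infty$) with $\nu(xy)=\nu(x)+\nu(y)$, $\nu(x+y)\ge\min(\nu(x),\nu(y))$, not identically zero on $K_R^\times$. *)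

From Stdlib Require Import Reals.
From HB Require Import structures.
From mathcomp Require Import all_boot all_order all_algebra.
Set Implicit Arguments. Unset Strict Implicit. Unset Printing Implicit Defensive.
Import GRing.Theory.
Local Open Scope ring_scope.

(* An A-algebra structure over a commutative ring D given by a ring map
   f : D -> A (scalar action r . a := f r * a). *)

Definition is_submodule (D : comNzRingType) (A : nzRingType) (f : D -> A)
  (M : A -> Prop) : Prop :=
  [/\ M 0,
      (forall x y, M x -> M y -> M (x + y)) &
      (forall (r : D) x, M x -> M (f r * x))].

Definition is_Mathieu_subspace (D : comNzRingType) (A : nzRingType) (f : D -> A)
  (M : A -> Prop) : Prop :=
  is_submodule f M /\
  forall a : A, (forall m : nat, (1 <= m)%N -> M (a ^+ m)) ->
    forall b c : A, exists N : nat, forall m : nat, (N <= m)%N -> M (b * a ^+ m * c).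

Definition strongly_simple (D : comNzRingType) (A : nzRingType) (f : D -> A) : Prop :=
  forall M : A -> Prop, is_Mathieu_subspace f M ->
    (forall x, M x <-> x = 0) \/ (forall x, M x).

(* non-trivial real-valued additive valuation on the nonzero elements of a field K
   (extended by nu(0) = +infinity, so only values at nonzero elements matter) *)
Definition is_nontriv_real_valuation (K : fieldType) (nu : K -> R) : Prop :=
  [/\ (forall x y : K, x != 0 -> y != 0 -> nu (x * y) = Rplus (nu x) (nu y)),
      (forall x y : K, x != 0 -> y != 0 -> (x + y) != 0 ->
          Rle (Rmin (nu x) (nu y)) (nu (x + y))) &
      (exists x : K, x != 0 /\ nu x <> R0)].

(* The elements of positive valuation, together with 0, form a Mathieu
   subspace of K: it is an R-submodule because nu >= 0 on R, and if
   nu a > 0 then nu (b a^m c) = nu b + m nu a + nu c is positive for large m.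
   It contains x or x^-1 for any x with nu x <> 0, but not 1, so it is
   neither 0 nor K. *)

From Stdlib Require Import Reals Lra.
From HB Require Import structures.
From mathcomp Require Import all_boot all_order all_algebra.
Import GRing.Theory.
Local Open Scope ring_scope.

Lemma not_strongly_simple_of_proper_Mathieu {D : comNzRingType} {A : nzRingType}
    {f : D -> A} {M : A -> Prop} {x y : A} :
  is_Mathieu_subspace f M -> x != 0 -> M x -> ~ M y -> ~ strongly_simple f.
Proof.
move=> MM nz_x Mx NMy /(_ M MM) [M0 | MT]; last exact: NMy.
by move: nz_x; rewrite ((M0 x).1 Mx) eqxx.
Qed.

Lemma INR_linear_eventually_pos (c a : R) :
  Rlt R0 a -> exists N : nat, forall m, (N <= m)%N -> Rlt R0 (Rplus c (Rmult (INR m) a)).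
Proof.
move=> a_gt0; have [N ltN] := INR_unbounded (Rdiv (Ropp c) a).
exists N => m /leP/le_INR leNm.
have -> : c = Ropp (Rmult (Rdiv (Ropp c) a) a) by field; lra.
have := Rmult_lt_compat_r a _ _ a_gt0 ltN.
have := Rmult_le_compat_r a _ _ (Rlt_le _ _ a_gt0) leNm.
lra.
Qed.

Section MultiplicativeMap.

Context {K : fieldType} (nu : K -> R).
Hypothesis nuM : forall x y : K, x != 0 -> y != 0 -> nu (x * y) = Rplus (nu x) (nu y).

Lemma valuation1 : nu 1 = R0.
Proof. by have := nuM 1 1 (oner_neq0 K) (oner_neq0 K); rewrite mulr1; lra. Qed.

Lemma valuationV (x : K) : x != 0 -> nu x^-1 = Ropp (nu x).
Proof.
move=> nz_x; have := nuM x x^-1 nz_x (invr_neq0 nz_x).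
by rewrite mulfV // valuation1; lra.
Qed.

Lemma valuationX (a : K) (m : nat) : a != 0 -> nu (a ^+ m) = Rmult (INR m) (nu a).
Proof.
move=> nz_a; elim: m => [|m IHm]; first by rewrite expr0 valuation1 /=; lra.
by rewrite exprS nuM ?expf_neq0 // IHm S_INR; lra.
Qed.

End MultiplicativeMap.

Definition valuation_pos_ideal {K : fieldType} (nu : K -> R) (x : K) : Prop :=
  x = 0 \/ Rlt R0 (nu x).

Section PositiveIdeal.

Context {K : fieldType} {nu : K -> R}.
Hypothesis nu_valuation : is_nontriv_real_valuation nu.
Local Notation M := (valuation_pos_ideal nu).

Let nuM (x y : K) : x != 0 -> y != 0 -> nu (x * y) = Rplus (nu x) (nu y).
Proof. by case: nu_valuation => nuM _ _; apply: nuM. Qed.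

Lemma valuation_pos_idealD (x y : K) : M x -> M y -> M (x + y).
Proof.
case: nu_valuation => _ nuD _.
move=> [-> | nux_gt0]; first by rewrite add0r.
move=> [-> | nuy_gt0]; first by rewrite addr0; right.
have [-> | nz_xy] := eqVneq (x + y) 0; first by left.
have [x0 | nz_x] := eqVneq x 0; first by rewrite x0 add0r; right.
have [y0 | nz_y] := eqVneq y 0; first by rewrite y0 addr0; right.
right; apply: Rlt_le_trans (nuD x y nz_x nz_y nz_xy).
exact: Rmin_glb_lt.
Qed.

Lemma valuation_pos_idealMl (a x : K) : (a != 0 -> Rle R0 (nu a)) -> M x -> M (a * x).
Proof.
move=> nua_ge0 [-> | nux_gt0]; first by left; rewrite mulr0.
have [-> | nz_a] := eqVneq a 0; first by left; rewrite mul0r.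
have [x0 | nz_x] := eqVneq x 0; first by left; rewrite x0 mulr0.
by right; rewrite nuM //; have := nua_ge0 nz_a; lra.
Qed.

Lemma valuation_pos_ideal_Mathieu {D : comNzRingType} {f : D -> K} :
  (forall r, f r != 0 -> Rle R0 (nu (f r))) -> is_Mathieu_subspace f M.
Proof.
move=> nuf_ge0; split.
  split=> [|x y|r x]; [by left | exact: valuation_pos_idealD |].
  exact: valuation_pos_idealMl (@nuf_ge0 r).
move=> a /(_ 1%N isT); rewrite expr1 => Ma b c.
have [-> | nz_b] := eqVneq b 0; first by exists 0%N => m _; left; rewrite !mul0r.
have [-> | nz_c] := eqVneq c 0; first by exists 0%N => m _; left; rewrite mulr0.
have [-> | nz_a] := eqVneq a 0.
  by exists 1%N => -[|m] // _; left; rewrite expr0n mulr0 mul0r.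
have nua_gt0 : Rlt R0 (nu a) by case: Ma => // /eqP; rewrite (negbTE nz_a).
have [N posN] := INR_linear_eventually_pos (Rplus (nu b) (nu c)) _ nua_gt0.
exists N => m leNm; right.
have nz_am : a ^+ m != 0 by rewrite expf_neq0.
rewrite nuM ?mulf_neq0 // nuM // valuationX //.
by have := posN m leNm; lra.
Qed.

Lemma valuation_pos_ideal_neq0 : exists2 x : K, x != 0 & M x.
Proof.
case: nu_valuation => _ _ [x [nz_x nux_neq0]].
have [nux_gt0 | nux_le0] := Rlt_or_le R0 (nu x); first by exists x => //; right.
exists x^-1; first by rewrite invr_neq0.
by right; rewrite valuationV //; lra.
Qed.

Lemma valuation_pos_ideal_notin1 : ~ M 1.
Proof.
case=> [/eqP | ]; first by rewrite oner_eq0.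
by rewrite valuation1 //; lra.
Qed.

End PositiveIdeal.

Theorem lemma6p6 (D : idomainType)
  (HDK : ~ (forall x : {fraction D}, exists r : D, x = FracField.tofrac r))
  (nu : {fraction D} -> R)
  (Hnu : is_nontriv_real_valuation nu)
  (HnuD : forall r : D, r != 0 -> Rle R0 (nu (FracField.tofrac r))) :
  ~ strongly_simple (@FracField.tofrac D).
Proof.
have [x nz_x Mx] := valuation_pos_ideal_neq0 Hnu.
have tofrac_nu_ge0 r : FracField.tofrac r != 0 -> Rle R0 (nu (FracField.tofrac r)).
  by move=> nz_r; apply: HnuD; apply: contra nz_r => /eqP ->; rewrite tofrac0.
have M_Mathieu := valuation_pos_ideal_Mathieu (f := @FracField.tofrac D) Hnu tofrac_nu_ge0.
exact: not_strongly_simple_of_proper_Mathieu M_Mathieu nz_x Mx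
         (valuation_pos_ideal_notin1 Hnu).
Qed.
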